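(* Suppose the distribution $\mathcal{D}$ on $\mathbb{R}^d$ has $(r,\alpha,\gamma)$ margins, and $\mathcal{D}'$ is a distribution on $\mathbb{R}^d$ with $\mathrm{TV}(\mathcal{D},\mathcal{D}')\le\theta$. If $\theta\le\frac12\inf_{\beta\ne0}\Pr_{e\sim\mathcal{D}}[\beta\cdot e>r\|\beta\|+\alpha\|\beta\|]$, then $\mathcal{D}'$ has $(r,\alpha,\gamma/4)$ margins.
   Context: $\mathrm{TV}$ denotes total variation distance. A distribution $\mathcal{D}$ on $\mathbb{R}^d$ has $(r,\alpha,\gamma)$ margins if for all $\beta\ne0$ and all $b\le r\|\beta\|$, with $e\sim\mathcal{D}$, $\Pr[\beta\cdot e>b+\alpha\|\beta\|\mid\beta\cdot e\ge b]\ge\gamma$. *)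

(* R^d is modeled as d.-tuple R with the product
   (= Borel) sigma-algebra provided by mathcomp-analysis (measurable_tuple). *)
From HB Require Import structures.
From mathcomp Require Import all_boot all_order all_algebra.
From mathcomp Require Import all_classical all_reals all_analysis.
Set Implicit Arguments. Unset Strict Implicit. Unset Printing Implicit Defensive.
Import Order.TTheory GRing.Theory Num.Theory.
Local Open Scope classical_set_scope.
Local Open Scope ring_scope.

Section Defs.
Context {R : realType} {d : nat}.

Definition dotv (x y : d.-tuple R) : R := \sum_(i < d) tnth x i * tnth y i.
Definition enorm (x : d.-tuple R) : R := Num.sqrt (\sum_(i < d) tnth x i ^+ 2).
Definition zerov : d.-tuple R := [tuple (0:R) | _ < d].

Definition Pr (P : probability (d.-tuple R) R) (A : set (d.-tuple R)) : R :=
  fine (P A).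

(* conditional probability Pr[A | B] = Pr[A /\ B] / Pr[B] (0 if Pr[B] = 0) *)
Definition condPr (P : probability (d.-tuple R) R) (A B : set (d.-tuple R)) : R :=
  Pr P (A `&` B) / Pr P B.

Definition TV (P Q : probability (d.-tuple R) R) : R :=
  sup [set `|Pr P A - Pr Q A| | A in [set A : set (d.-tuple R) | measurable A]].

Definition has_margins (P : probability (d.-tuple R) R) (r alpha gamma : R) : Prop :=
  forall beta : d.-tuple R, beta != zerov ->
  forall b : R, b <= r * enorm beta ->
    gamma <= condPr P [set e | b + alpha * enorm beta < dotv beta e]
                      [set e | b <= dotv beta e].

End Defs.

(* Lower the threshold of the event in the margin condition down to r|beta|:
   the infimum hypothesis then gives Pr_D[A] >= 2 theta for the numerator event A,
   so under D' the numerator keeps at least half of its mass, while the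
   denominator Pr_D[B] <= Pr_D[A] / gamma grows by at most theta <= Pr_D[A] / 2.
   The ratio therefore drops by at most a constant factor. *)
From HB Require Import structures.
From mathcomp Require Import all_boot all_order all_algebra.
From mathcomp Require Import all_classical all_reals all_analysis.
From mathcomp Require Import lra.
Import Order.TTheory GRing.Theory Num.Theory.
Local Open Scope classical_set_scope.
Local Open Scope ring_scope.

Lemma ratio_perturb {R : realFieldType} {g a b a' b' t : R} :
  0 < g -> 0 <= a -> a <= b -> g <= a / b -> 2 * t <= a ->
  `|a' - a| <= t -> `|b' - b| <= t -> g / 4 <= a' / b'.
Proof.
move=> g_gt0 a_ge0 ab gab ta; rewrite !ler_norml => /andP[da1 da2] /andP[db1 db2].
have b_gt0 : 0 < b.
  rewrite lt_neqAle (le_trans a_ge0 ab) andbT; apply: contraTneq gab => <-.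
  by rewrite invr0 mulr0 -ltNge.
have gb_le_a : g * b <= a by rewrite -ler_pdivlMr.
have g_le1 : g <= 1 by rewrite -(ler_pM2r b_gt0) mul1r (le_trans gb_le_a).
have b'_gt0 : 0 < b' by nra.
rewrite ler_pdivlMr // mulrAC ler_pdivrMr //; nra.
Qed.

Section ProbabilityOnTuples.
Context {R : realType} {d : nat}.
Implicit Types (P Q : probability (d.-tuple R) R) (A B : set (d.-tuple R)).

Lemma Pr_ge0 P A : 0 <= Pr P A.
Proof. exact/fine_ge0/measure_ge0. Qed.

Lemma Pr_le1 P A : measurable A -> Pr P A <= 1.
Proof.
by move=> mA; rewrite -[1]/(fine 1%E) fine_le ?fin_num_measure ?probability_le1.
Qed.

Lemma Pr_le P A B : measurable A -> measurable B -> A `<=` B -> Pr P A <= Pr P B.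
Proof.
by move=> mA mB AB; rewrite fine_le ?fin_num_measure ?le_measure ?inE.
Qed.

Lemma condPr_ge0 P A B : 0 <= condPr P A B.
Proof. by rewrite divr_ge0 ?Pr_ge0. Qed.

Lemma Pr_TV P Q A : measurable A -> `|Pr P A - Pr Q A| <= TV P Q.
Proof.
move=> mA; apply: ub_le_sup; last by exists A.
exists 2 => _ [B mB <-].
have := Pr_le1 P B mB; have := Pr_le1 Q B mB; have := Pr_ge0 P B; have := Pr_ge0 Q B.
rewrite ler_norml; lra.
Qed.

Lemma condPr_TV P Q A B gamma : measurable A -> measurable B -> A `<=` B ->
  gamma <= condPr P A B -> 2 * TV P Q <= Pr P A -> gamma / 4 <= condPr Q A B.
Proof.
move=> mA mB AB gAB TVA; have [g_le0|g_gt0] := lerP gamma 0.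
  by rewrite (le_trans _ (condPr_ge0 _ _ _)) // pmulr_lle0.
rewrite /condPr (setIidl AB) in gAB *.
apply: (ratio_perturb g_gt0 (Pr_ge0 P A) (Pr_le P A B mA mB AB) gAB TVA).
all: by rewrite distrC Pr_TV.
Qed.

Lemma measurable_dotv (beta : d.-tuple R) : measurable_fun setT (dotv beta).
Proof.
apply: measurable_sum => i.
exact: measurable_realfun.measurable_funM (measurable_cst _) (measurable_tnth i).
Qed.

Lemma measurable_dotv_gt (beta : d.-tuple R) c :
  measurable [set e | c < dotv beta e].
Proof.
rewrite -preimage_itvoy -[_ @^-1` _]setTI.
by apply: measurable_dotv => //; exact: measurable_itv.
Qed.

Lemma measurable_dotv_ge (beta : d.-tuple R) c :
  measurable [set e | c <= dotv beta e].
Proof.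
rewrite -preimage_itvcy -[_ @^-1` _]setTI.
by apply: measurable_dotv => //; exact: measurable_itv.
Qed.

Lemma enorm_ge0 (beta : d.-tuple R) : 0 <= enorm beta.
Proof. exact: sqrtr_ge0. Qed.

End ProbabilityOnTuples.

Theorem lemma20 (R : realType) (d : nat)
  (D D' : probability (d.-tuple R) R) (r alpha gamma theta : R) :
  0 <= alpha ->
  has_margins D r alpha gamma ->
  TV D D' <= theta ->
  theta <= 2^-1 * inf [set Pr D [set e | r * enorm beta + alpha * enorm beta < dotv beta e]
                       | beta in [set beta : d.-tuple R | beta != zerov]] ->
  has_margins D' r alpha (gamma / 4).
Proof.
move=> alpha_ge0 marginsD TV_le theta_le beta beta_neq0 b b_le.
set A := [set e | b + alpha * enorm beta < dotv beta e].
have AB : A `<=` [set e | b <= dotv beta e].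
  by move=> e /ltW; apply: le_trans; rewrite lerDl mulr_ge0 ?enorm_ge0.
have CA : [set e | r * enorm beta + alpha * enorm beta < dotv beta e] `<=` A.
  by move=> e; apply: le_lt_trans; rewrite lerD2r.
apply: condPr_TV AB (marginsD _ beta_neq0 _ b_le) _.
- exact: measurable_dotv_gt.
- exact: measurable_dotv_ge.
rewrite -ler_pdivlMl //; apply: (le_trans TV_le); apply: (le_trans theta_le).
rewrite ler_pM2l ?invr_gt0 //.
apply: le_trans (Pr_le D _ _ (measurable_dotv_gt _ _) (measurable_dotv_gt _ _) CA).
by apply: ge_inf; [exists 0 => _ [? _ <-]; exact: Pr_ge0 | exists beta].
Qed.
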